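(* Let $\mathcal{L}$ be a sound reasoning logic, and use the typing relation it determines. Then for every context $\Gamma$ and all $\eta,\eta'\in[\![\Gamma]\!]$ with $\eta\sim_\Gamma\eta'$: if $\Gamma\vdash v:A$ then $[\![\Gamma\vdash v:A]\!]\eta\sim_A[\![\Gamma\vdash v:A]\!]\eta'$; and if $\Gamma\vdash c:\underline{C}$ then $[\![\Gamma\vdash c:\underline{C}]\!]\eta\sim_{\underline{C}}[\![\Gamma\vdash c:\underline{C}]\!]\eta'$.
   Context: We work with a fine-grain call-by-value calculus of algebraic effects and handlers, parametrised by a reasoning logic $\mathcal{L}$. Syntax. Values $v ::= x \mid () \mid \mathtt{true} \mid \mathtt{false} \mid \mathtt{fun}\ x \mapsto c \mid \mathtt{handler}\,(\mathtt{return}\ x \mapsto c_r;\ h)$. Computations $c ::= \mathtt{if}\ v\ \mathtt{then}\ c_1\ \mathtt{else}\ c_2 \mid v_1\, v_2 \mid \mathtt{return}\ v \mid \mathit{op}(v; y.c) \mid \mathtt{do}\ x \leftarrow c_1\ \mathtt{in}\ c_2 \mid \mathtt{with}\ v\ \mathtt{handle}\ c$. Operation clauses $h$: finite sets of clauses $\mathit{op}(x;k) \mapsto c_{\mathit{op}}$, at most one per operation. Types: $A,B ::= \mathtt{unit}\mid\mathtt{bool}\mid A\to\underline{C}\mid\underline{C}\Rightarrow\underline{D}$; $\underline{C},\underline{D} ::= A\,!\,\Sigma/\mathcal{E}$; a signature $\Sigma$ is a finite set of typed operations $\mathit{op}:A_{\mathit{op}}\to B_{\mathit{op}}$ with distinct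 names; a theory $\mathcal{E}$ is a finite set of equations $(x_i:A_i)_i;(z_j:B_j\to * )_j\vdash T_1\sim T_2$; templates $T ::= z(v)\mid\mathtt{if}\ v\ \mathtt{then}\ T_1\ \mathtt{else}\ T_2\mid\mathit{op}(v;y.T)$. Template typing $\Gamma;Z\vdash T:\Sigma$: $z(v)$ if $(z:A\to * )\in Z$, $\Gamma\vdash v:A$; conditional if $\Gamma\vdash v:\mathtt{bool}$ and branches typed; $\mathit{op}(v;y.T)$ if $(\mathit{op}:A_{\mathit{op}}\to B_{\mathit{op}})\in\Sigma$, $\Gamma\vdash v:A_{\mathit{op}}$, $\Gamma,y:B_{\mathit{op}};Z\vdash T:\Sigma$. A type $A\,!\,\Sigma/\mathcal{E}$ is well-formed iff its components are and every equation of $\mathcal{E}$ has both templates well-typed over $\Sigma$. Typing: $\Gamma\vdash x:A$ for $(x:A)\in\Gamma$; $():\mathtt{unit}$; $\mathtt{true},\mathtt{false}:\mathtt{bool}$; $\Gamma\vdash\mathtt{fun}\ x\mapsto c:A\to\underline{C}$ if $\Gamma,x:A\vdash c:\underline{C}$; $\Gamma\vdash\mathtt{handler}\,(\mathtt{return}\ x\mapsto c_r;h):A\,!\,\Sigma/\mathcal{E}\Rightarrow\underline{D}$ if $\Gamma,x:A\vdash c_r:\underline{D}$ and $\Gamma\vdash h\models_{\mathcal{E},\Sigma}\underline{D}$; conditionals need $v:\mathtt{bool}$ and both branches of type $\underline{C}$; $v_1\,v_2:\underline{C}$ if $v_1:A\to\underline{C}$, $v_2:A$; $\mathtt{return}\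 v:A\,!\,\Sigma/\mathcal{E}$ if $v:A$; $\Gamma\vdash\mathit{op}(v;y.c):A\,!\,\Sigma/\mathcal{E}$ if $(\mathit{op}:A_{\mathit{op}}\to B_{\mathit{op}})\in\Sigma$, $\Gamma\vdash v:A_{\mathit{op}}$, $\Gamma,y:B_{\mathit{op}}\vdash c:A\,!\,\Sigma/\mathcal{E}$; $\Gamma\vdash\mathtt{do}\ x\leftarrow c_1\ \mathtt{in}\ c_2:B\,!\,\Sigma/\mathcal{E}$ if $\Gamma\vdash c_1:A\,!\,\Sigma/\mathcal{E}$, $\Gamma,x:A\vdash c_2:B\,!\,\Sigma/\mathcal{E}$; $\mathtt{with}\ v\ \mathtt{handle}\ c:\underline{D}$ if $v:\underline{C}\Rightarrow\underline{D}$, $c:\underline{C}$. Clauses: $\Gamma\vdash h:\Sigma\Rrightarrow\underline{D}$ iff $h$ has exactly one clause $\mathit{op}(x;k)\mapsto c_{\mathit{op}}$ per $\mathit{op}\in\Sigma$ and no others, with $\Gamma,x:A_{\mathit{op}},k:B_{\mathit{op}}\to\underline{D}\vdash c_{\mathit{op}}:\underline{D}$. A reasoning logic $\mathcal{L}$ supplies the judgement $\Gamma\vdash h\models_{\mathcal{E},\Sigma}\underline{D}$, which may only hold when $\Gamma\vdash h:\Sigma\Rrightarrow\underline{D}$ and $\mathcal{E}$ is well-typed over $\Sigma$. Denotations (theories ignored): $[\![\mathtt{unit}]\!]=\{\star\}$, $[\![\mathtt{bool}]\!]=\{\mathrm{ff},\mathrm{tt}\}$, function/handler types denote full function sets, $[\![A\,!\,\Sigma/\mathcal{E}]\!]=[\![\Sigma]\!][\![A]\!]$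 where $[\![\Sigma]\!]X$ is the inductive set of elements $\mathrm{in}_{\mathrm{return}}(a)$, $a\in X$, and $\mathrm{in}_{\mathit{op}}(a;\kappa)$, $\mathit{op}\in\Sigma$, $a\in[\![A_{\mathit{op}}]\!]$, $\kappa:[\![B_{\mathit{op}}]\!]\to[\![\Sigma]\!]X$. An interpretation $H$ of $\Sigma$ over $Y$: functions $H_{\mathit{op}}:[\![A_{\mathit{op}}]\!]\times([\![B_{\mathit{op}}]\!]\to Y)\to Y$. Free interpretation $(F^X_\Sigma)_{\mathit{op}}(a,\kappa)=\mathrm{in}_{\mathit{op}}(a;\kappa)$. Lift: $f^\dagger_H(\mathrm{in}_{\mathrm{return}}(x))=f(x)$, $f^\dagger_H(\mathrm{in}_{\mathit{op}}(x;\kappa))=H_{\mathit{op}}(x,f^\dagger_H\circ\kappa)$. $[\![\varepsilon]\!]=\{\star\}$, $[\![\Gamma,x:A]\!]=[\![\Gamma]\!]\times[\![A]\!]$. For $\eta\in[\![\Gamma]\!]$: variables project; $()\mapsto\star$, $\mathtt{true}\mapsto\mathrm{tt}$, $\mathtt{false}\mapsto\mathrm{ff}$; $[\![\mathtt{fun}\ x\mapsto c]\!]\eta=\lambda a.[\![c]\!](\eta,a)$; $([\![h]\!]\eta)_{\mathit{op}}(a,\kappa)=[\![c_{\mathit{op}}]\!](\eta,a,\kappa)$ (an interpretation of $\Sigma$ over $[\![\underline{D}]\!]$); $[\![\mathtt{handler}\,(\mathtt{return}\ x\mapsto c_r;h)]\!]\eta=(\lambda a.[\![c_r]\!](\eta,a))^\dagger_{[\![h]\!]\eta}$;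 conditionals by cases on $[\![v]\!]\eta$; $[\![v_1\,v_2]\!]\eta=([\![v_1]\!]\eta)([\![v_2]\!]\eta)$; $[\![\mathtt{return}\ v]\!]\eta=\mathrm{in}_{\mathrm{return}}([\![v]\!]\eta)$; $[\![\mathit{op}(v;y.c)]\!]\eta=\mathrm{in}_{\mathit{op}}([\![v]\!]\eta;\lambda b.[\![c]\!](\eta,b))$; for $c_2:B\,!\,\Sigma/\mathcal{E}$, $[\![\mathtt{do}\ x\leftarrow c_1\ \mathtt{in}\ c_2]\!]\eta=(\lambda a.[\![c_2]\!](\eta,a))^\dagger_{F^{[\![B]\!]}_\Sigma}([\![c_1]\!]\eta)$; $[\![\mathtt{with}\ v\ \mathtt{handle}\ c]\!]\eta=([\![v]\!]\eta)([\![c]\!]\eta)$. Template denotation: for $Z=(z_j:B_j\to * )_j$, $[\![Z]\!]Y=\prod_jY^{[\![B_j]\!]}$; for $H$ over $Y$, $[\![T]\!]_H:[\![\Gamma]\!]\times[\![Z]\!]Y\to Y$ with $[\![z_j(v)]\!]_H(\eta;\zeta)=\zeta_j([\![v]\!]\eta)$, conditionals by cases, $[\![\mathit{op}(v;y.T)]\!]_H(\eta;\zeta)=H_{\mathit{op}}([\![v]\!]\eta,\lambda b.[\![T]\!]_H((\eta,b);\zeta))$. Relations (mutual): $\sim_{\mathtt{unit}},\sim_{\mathtt{bool}}$ are equality; $f\sim_{A\to\underline{C}}f'$ iff $a\sim_Aa'$ implies $f(a)\sim_{\underline{C}}f'(a')$; $h\sim_{\underline{C}\Rightarrow\underline{D}}h'$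 iff $t\sim_{\underline{C}}t'$ implies $h(t)\sim_{\underline{D}}h'(t')$; for $\underline{C}=A\,!\,\Sigma/\mathcal{E}$, $\sim_{\underline{C}}$ is the smallest symmetric, transitive relation on $[\![\Sigma]\!][\![A]\!]$ with: $a\sim_Aa'\Rightarrow\mathrm{in}_{\mathrm{return}}(a)\sim_{\underline{C}}\mathrm{in}_{\mathrm{return}}(a')$; for $\mathit{op}\in\Sigma$, $a\sim_{A_{\mathit{op}}}a'$ and $f\sim_{B_{\mathit{op}}\to\underline{C}}f'$ imply $\mathrm{in}_{\mathit{op}}(a;f)\sim_{\underline{C}}\mathrm{in}_{\mathit{op}}(a';f')$; for each equation $(x_i:A_i)_i;(z_j:B_j\to * )_j\vdash T_1\sim T_2$ in $\mathcal{E}$, $a_i\sim_{A_i}a_i'$ and $f_j\sim_{B_j\to\underline{C}}f_j'$ imply $[\![T_1]\!]_{F^{[\![A]\!]}_\Sigma}((a_i);(f_j))\sim_{\underline{C}}[\![T_2]\!]_{F^{[\![A]\!]}_\Sigma}((a_i');(f_j'))$. For $\Gamma=(x_i:A_i)_i$, $\eta\sim_\Gamma\eta'$ iff $\eta_i\sim_{A_i}\eta_i'$ for all $i$. Soundness: $\mathcal{L}$ is sound if whenever $\Gamma\vdash h\models_{\mathcal{E},\Sigma}\underline{D}$ holds, then for every equation $(x_i:A_i)_i;(z_j:B_j\to * )_j\vdash T_1\sim T_2$ in $\mathcal{E}$, all $\eta\sim_\Gamma\eta'$, all $a_i\sim_{A_i}a_i'$ and all $f_j\sim_{B_j\to\underline{D}}f_j'$: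 $[\![T_1]\!]_{[\![h]\!]\eta}((a_i)_i;(f_j)_j)\sim_{\underline{D}}[\![T_2]\!]_{[\![h]\!]\eta'}((a_i')_i;(f_j')_j)$. *)

(* Variables are de Bruijn indices (index 0 = the most
   recently bound variable = the last entry of the context). *)
From Stdlib Require Import List PeanoNat.
Import ListNotations.
Set Implicit Arguments.

Definition opname := nat.

Inductive value : Type :=
| VVar (n : nat)
| VUnit | VTrue | VFalse
| VFun (c : comp)                         (* fun x |-> c, x bound in c *)
| VHandler (cr : comp) (h : clauses)      (* handler (return x |-> cr; h) *)
with comp : Type :=
| CIf (v : value) (c1 c2 : comp)
| CApp (v1 v2 : value)
| CRet (v : value)
| COp (op : opname) (v : value) (c : comp)  (* op(v; y.c), y bound in c *)
| CDo (c1 c2 : comp)                         (* do x <- c1 in c2, x bound in c2 *)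
| CWith (v : value) (c : comp)
(* operation clauses: op(x;k) |-> c, with x (index 1) and k (index 0) bound in c *)
with clauses : Type :=
| HNil
| HCons (op : opname) (c : comp) (h : clauses).

Fixpoint hnames (h : clauses) : list opname :=
  match h with HNil => [] | HCons o _ h' => o :: hnames h' end.

Fixpoint hlookup (o : opname) (h : clauses) : option comp :=
  match h with
  | HNil => None
  | HCons o' c h' => if Nat.eqb o o' then Some c else hlookup o h'
  end.

(** Templates; z-variables are indices into Z (index 0 = last entry). *)
Inductive template : Type :=
| TZ (j : nat) (v : value)
| TIfT (v : value) (T1 T2 : template)
| TOpT (op : opname) (v : value) (T : template).  (* y bound in T *)

Inductive vtype : Type :=
| TUnit | TBool
| TArr (A : vtype) (C : ctype)
| THand (C D : ctype)
with ctype : Type :=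
| CTy (A : vtype) (Sig : list (opname * vtype * vtype)) (E : list equation)
(* (x_i : A_i)_i ; (z_j : B_j -> * )_j |- T1 ~ T2 *)
with equation : Type :=
| Eqn (Gx : list vtype) (Z : list vtype) (T1 T2 : template).

Definition signature := list (opname * vtype * vtype).
Definition ctx := list vtype.

Fixpoint signames (Sg : signature) : list opname :=
  match Sg with [] => [] | (o, _, _) :: Sg' => o :: signames Sg' end.

(** * Free model [[Sigma]]X, as the free monad of a container;
      operations are indexed by their position in the signature. *)
Inductive Free (I : Type) (Ar Co : I -> Type) (X : Type) : Type :=
| Ret (x : X)
| Op (i : I) (a : Ar i) (k : Co i -> Free Ar Co X).
Arguments Ret {I Ar Co X} x.
Arguments Op {I Ar Co X} i a k.

Fixpoint sig_ar_gen (f : vtype -> Type) (Sg : signature) (i : nat) : Type :=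
  match Sg with
  | [] => Empty_set
  | (_, A, _) :: Sg' => match i with 0 => f A | S i' => sig_ar_gen f Sg' i' end
  end.
Fixpoint sig_co_gen (f : vtype -> Type) (Sg : signature) (i : nat) : Type :=
  match Sg with
  | [] => Empty_set
  | (_, _, B) :: Sg' => match i with 0 => f B | S i' => sig_co_gen f Sg' i' end
  end.

Fixpoint den_v (A : vtype) : Type :=
  match A with
  | TUnit => unit
  | TBool => bool
  | TArr A C => den_v A -> den_c C
  | THand C D => den_c C -> den_c D
  end
with den_c (C : ctype) : Type :=
  match C with
  | CTy A Sg _ => Free (sig_ar_gen den_v Sg) (sig_co_gen den_v Sg) (den_v A)
  end.

Definition sig_ar (Sg : signature) := sig_ar_gen den_v Sg.
Definition sig_co (Sg : signature) := sig_co_gen den_v Sg.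

Definition interp (Sg : signature) (Y : Type) : Type :=
  forall i : nat, sig_ar Sg i -> (sig_co Sg i -> Y) -> Y.

Definition free_interp (Sg : signature) (X : Type)
  : interp Sg (Free (sig_ar Sg) (sig_co Sg) X) := fun i a k => Op i a k.

Fixpoint lift {I : Type} {Ar Co : I -> Type} {X Y : Type}
  (H : forall i, Ar i -> (Co i -> Y) -> Y) (f : X -> Y) (t : Free Ar Co X) : Y :=
  match t with
  | Ret x => f x
  | Op i a k => H i a (fun b => lift H f (k b))
  end.

Fixpoint den_ctx (G : ctx) : Type :=
  match G with [] => unit | A :: G' => (den_ctx G' * den_v A)%type end.

Fixpoint zden (Z : list vtype) (Y : Type) : Type :=
  match Z with [] => unit | B :: Z' => (zden Z' Y * (den_v B -> Y))%type end.

Inductive var_in : list vtype -> nat -> vtype -> Type :=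
| vi_here : forall G A, var_in (A :: G) 0 A
| vi_there : forall G A B n, var_in G n A -> var_in (B :: G) (S n) A.

Fixpoint proj_ctx {G n A} (p : var_in G n A) : den_ctx G -> den_v A :=
  match p in var_in G n A return den_ctx G -> den_v A with
  | vi_here _ _ => fun e => snd e
  | vi_there _ p' => fun e => proj_ctx p' (fst e)
  end.

Fixpoint proj_z {Z n B} (p : var_in Z n B) {Y : Type} : zden Z Y -> den_v B -> Y :=
  match p in var_in Z n B return zden Z Y -> den_v B -> Y with
  | vi_here _ _ => fun z => snd z
  | vi_there _ p' => fun z => proj_z p' (fst z)
  end.

Inductive sig_in : signature -> opname -> vtype -> vtype -> Type :=
| si_here : forall Sg o A B, sig_in ((o, A, B) :: Sg) o A B
| si_there : forall Sg o A B o' A' B',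
    o <> o' -> sig_in Sg o A B -> sig_in ((o', A', B') :: Sg) o A B.

Fixpoint sig_pos {Sg o A B} (p : sig_in Sg o A B) : nat :=
  match p with si_here _ _ _ _ => 0 | si_there _ _ _ p' => S (sig_pos p') end.

Fixpoint sig_in_ar {Sg o A B} (p : sig_in Sg o A B) : den_v A -> sig_ar Sg (sig_pos p) :=
  match p in sig_in Sg o A B return den_v A -> sig_ar Sg (sig_pos p) with
  | si_here _ _ _ _ => fun a => a
  | si_there _ _ _ p' => fun a => sig_in_ar p' a
  end.

Fixpoint sig_in_co {Sg o A B} (p : sig_in Sg o A B) : sig_co Sg (sig_pos p) -> den_v B :=
  match p in sig_in Sg o A B return sig_co Sg (sig_pos p) -> den_v B with
  | si_here _ _ _ _ => fun b => b
  | si_there _ _ _ p' => fun b => sig_in_co p' b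
  end.

(** * Reasoning logic judgement  Gamma |- h |=_{E,Sigma} D  *)
Definition model := ctx -> clauses -> list equation -> signature -> ctype -> Prop.

Definition hnames_ok (h : clauses) (Sg : signature) : Prop :=
  NoDup (hnames h) /\ forall o, In o (hnames h) <-> In o (signames Sg).

Inductive vtyping (M : model) : ctx -> value -> vtype -> Type :=
| TyVar : forall G n A, var_in G n A -> vtyping M G (VVar n) A
| TyUnit : forall G, vtyping M G VUnit TUnit
| TyTrue : forall G, vtyping M G VTrue TBool
| TyFalse : forall G, vtyping M G VFalse TBool
| TyFun : forall G A C c, ctyping M (A :: G) c C -> vtyping M G (VFun c) (TArr A C)
| TyHandler : forall G A Sg E D cr h,
    ctyping M (A :: G) cr D ->
    htyping M G h D Sg -> hnames_ok h Sg ->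
    M G h E Sg D ->
    vtyping M G (VHandler cr h) (THand (CTy A Sg E) D)
with ctyping (M : model) : ctx -> comp -> ctype -> Type :=
| TyIf : forall G v c1 c2 C,
    vtyping M G v TBool -> ctyping M G c1 C -> ctyping M G c2 C ->
    ctyping M G (CIf v c1 c2) C
| TyApp : forall G v1 v2 A C,
    vtyping M G v1 (TArr A C) -> vtyping M G v2 A -> ctyping M G (CApp v1 v2) C
| TyRet : forall G v A Sg E, vtyping M G v A -> ctyping M G (CRet v) (CTy A Sg E)
| TyOp : forall G o v c A Sg E Aop Bop,
    sig_in Sg o Aop Bop -> vtyping M G v Aop ->
    ctyping M (Bop :: G) c (CTy A Sg E) ->
    ctyping M G (COp o v c) (CTy A Sg E)
| TyDo : forall G c1 c2 A B Sg E,
    ctyping M G c1 (CTy A Sg E) -> ctyping M (A :: G) c2 (CTy B Sg E) ->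
    ctyping M G (CDo c1 c2) (CTy B Sg E)
| TyWith : forall G v c C D,
    vtyping M G v (THand C D) -> ctyping M G c C -> ctyping M G (CWith v c) D
(* typing of the clause bodies of h, one for each operation of Sigma
   (together with [hnames_ok h Sigma] this is  Gamma |- h : Sigma => D) *)
with htyping (M : model) : ctx -> clauses -> ctype -> signature -> Type :=
| HtyNil : forall G h D, htyping M G h D []
| HtyCons : forall G h D Sg o A B c,
    hlookup o h = Some c ->
    ctyping M (TArr B D :: A :: G) c D ->
    htyping M G h D Sg ->
    htyping M G h D ((o, A, B) :: Sg).

Inductive ttyping (M : model) : ctx -> list vtype -> signature -> template -> Type :=
| TtZ : forall G Z Sg j v B,
    var_in Z j B -> vtyping M G v B -> ttyping M G Z Sg (TZ j v)
| TtIf : forall G Z Sg v T1 T2,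
    vtyping M G v TBool -> ttyping M G Z Sg T1 -> ttyping M G Z Sg T2 ->
    ttyping M G Z Sg (TIfT v T1 T2)
| TtOp : forall G Z Sg o v T A B,
    sig_in Sg o A B -> vtyping M G v A -> ttyping M (B :: G) Z Sg T ->
    ttyping M G Z Sg (TOpT o v T).

Fixpoint den_val {M G v A} (d : vtyping M G v A) {struct d} : den_ctx G -> den_v A :=
  match d in vtyping _ G v A return den_ctx G -> den_v A with
  | @TyVar _ _ _ _ p => fun e => proj_ctx p e
  | @TyUnit _ _ => fun _ => tt
  | @TyTrue _ _ => fun _ => true
  | @TyFalse _ _ => fun _ => false
  | @TyFun _ _ _ _ _ dc => fun e => fun a => den_comp dc (e, a)
  | @TyHandler _ _ _ _ _ _ _ _ dr dh _ _ =>
      fun e => lift (den_h dh e) (fun a => den_comp dr (e, a))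
  end
with den_comp {M G c C} (d : ctyping M G c C) {struct d} : den_ctx G -> den_c C :=
  match d in ctyping _ G c C return den_ctx G -> den_c C with
  | @TyIf _ _ _ _ _ _ dv d1 d2 => fun e => if den_val dv e then den_comp d1 e else den_comp d2 e
  | @TyApp _ _ _ _ _ _ d1 d2 => fun e => (den_val d1 e) (den_val d2 e)
  | @TyRet _ _ _ _ _ _ dv => fun e => Ret (den_val dv e)
  | @TyOp _ _ _ _ _ _ _ _ _ _ p dv dc =>
      fun e => Op (sig_pos p) (sig_in_ar p (den_val dv e))
                  (fun b => den_comp dc (e, sig_in_co p b))
  | @TyDo _ _ _ _ _ _ _ _ d1 d2 =>
      fun e => lift (fun i a k => Op i a k) (fun a => den_comp d2 (e, a)) (den_comp d1 e)
  | @TyWith _ _ _ _ _ _ dv dc => fun e => (den_val dv e) (den_comp dc e)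
  end
with den_h {M G h D Sg} (d : htyping M G h D Sg) {struct d}
  : den_ctx G -> interp Sg (den_c D) :=
  match d in htyping _ G h D Sg return den_ctx G -> interp Sg (den_c D) with
  | @HtyNil _ _ _ _ => fun _ i => match i return sig_ar [] i -> _ with
                                 | 0 => fun a => match a with end
                                 | S _ => fun a => match a with end end
  | @HtyCons _ _ _ _ _ _ _ _ _ _ dc dh' =>
      fun e i => match i with
                 | 0 => fun a k => den_comp dc ((e, a), k)
                 | S i' => den_h dh' e i'
                 end
  end.

Fixpoint den_t {M G Z Sg T} (d : ttyping M G Z Sg T) {Y : Type} (H : interp Sg Y)
  {struct d} : den_ctx G -> zden Z Y -> Y :=
  match d in ttyping _ G Z Sg T return interp Sg Y -> den_ctx G -> zden Z Y -> Y with
  | @TtZ _ _ _ _ _ _ _ p dv => fun _ e z => proj_z p z (den_val dv e)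
  | @TtIf _ _ _ _ _ _ _ dv d1 d2 => fun H e z => if den_val dv e then den_t d1 H e z else den_t d2 H e z
  | @TtOp _ _ _ _ _ _ _ _ _ p dv dT =>
      fun H e z => H (sig_pos p) (sig_in_ar p (den_val dv e))
                     (fun b => den_t dT H (e, sig_in_co p b) z)
  end H.

(** Relations are passed explicitly to the
      auxiliary structural recursions so that the mutual fixpoint is
      structural on types. *)
Definition vrel := forall A : vtype, den_v A -> den_v A -> Prop.

Fixpoint rel_ctx_gen (rv : vrel) (G : ctx) : den_ctx G -> den_ctx G -> Prop :=
  match G return den_ctx G -> den_ctx G -> Prop with
  | [] => fun _ _ => True
  | A :: G' => fun e e' => rel_ctx_gen rv G' (fst e) (fst e') /\ rv A (snd e) (snd e')
  end.

(** f ~_{B -> C} f' with ~_C replaced by R, componentwise on [[Z]]Y *)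
Fixpoint relZ_gen (rv : vrel) (Z : list vtype) {Y : Type} (R : Y -> Y -> Prop)
  : zden Z Y -> zden Z Y -> Prop :=
  match Z return zden Z Y -> zden Z Y -> Prop with
  | [] => fun _ _ => True
  | B :: Z' => fun z z' => relZ_gen rv Z' R (fst z) (fst z') /\
                 forall b b', rv B b b' -> R (snd z b) (snd z' b')
  end.

Fixpoint ar_rel_gen (rv : vrel) (Sg : signature) (i : nat)
  : sig_ar Sg i -> sig_ar Sg i -> Prop :=
  match Sg return sig_ar Sg i -> sig_ar Sg i -> Prop with
  | [] => fun _ _ => False
  | (_, A, _) :: Sg' =>
      match i return sig_ar ((_, A, _) :: Sg') i -> sig_ar ((_, A, _) :: Sg') i -> Prop with
      | 0 => rv A
      | S i' => ar_rel_gen rv Sg' i'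
      end
  end.

Fixpoint co_rel_gen (rv : vrel) (Sg : signature) (i : nat)
  : sig_co Sg i -> sig_co Sg i -> Prop :=
  match Sg return sig_co Sg i -> sig_co Sg i -> Prop with
  | [] => fun _ _ => False
  | (_, _, B) :: Sg' =>
      match i return sig_co ((_, _, B) :: Sg') i -> sig_co ((_, _, B) :: Sg') i -> Prop with
      | 0 => rv B
      | S i' => co_rel_gen rv Sg' i'
      end
  end.

(** the equation rule of ~_C, for each equation of E *)
Fixpoint eqs_rel_gen (M : model) (rv : vrel) (A : vtype) (Sg : signature)
  (R : den_c (CTy A Sg []) -> den_c (CTy A Sg []) -> Prop) (E : list equation) : Prop :=
  match E with
  | [] => True
  | Eqn Gx Z T1 T2 :: E' =>
      (forall (d1 : ttyping M Gx Z Sg T1) (d2 : ttyping M Gx Z Sg T2)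
              (a a' : den_ctx Gx) (f f' : zden Z (den_c (CTy A Sg []))),
          rel_ctx_gen rv Gx a a' -> relZ_gen rv Z R f f' ->
          R (den_t d1 (@free_interp Sg (den_v A)) a f)
            (den_t d2 (@free_interp Sg (den_v A)) a' f'))
      /\ eqs_rel_gen M rv R E'
  end.

Definition closed_rel (M : model) (rv : vrel) (A : vtype) (Sg : signature)
  (E : list equation) (R : den_c (CTy A Sg []) -> den_c (CTy A Sg []) -> Prop) : Prop :=
  (forall t t', R t t' -> R t' t) /\
  (forall t1 t2 t3, R t1 t2 -> R t2 t3 -> R t1 t3) /\
  (forall a a', rv A a a' -> R (Ret a) (Ret a')) /\
  (forall i a a' k k', ar_rel_gen rv Sg i a a' ->
     (forall b b', co_rel_gen rv Sg i b b' -> R (k b) (k' b')) ->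
     R (Op i a k) (Op i a' k')) /\
  eqs_rel_gen M rv R E.

Fixpoint rel_v (M : model) (A : vtype) : den_v A -> den_v A -> Prop :=
  match A return den_v A -> den_v A -> Prop with
  | TUnit => fun x y => x = y
  | TBool => fun x y => x = y
  | TArr A C => fun f f' => forall a a', rel_v M A a a' -> rel_c M C (f a) (f' a')
  | THand C D => fun h h' => forall t t', rel_c M C t t' -> rel_c M D (h t) (h' t')
  end
with rel_c (M : model) (C : ctype) : den_c C -> den_c C -> Prop :=
  match C return den_c C -> den_c C -> Prop with
  | CTy A Sg E =>
      (* the smallest symmetric transitive relation closed under the rules *)
      fun t t' => forall R, @closed_rel M (rel_v M) A Sg E R -> R t t'
  end.

Definition rel_ctx (M : model) (G : ctx) := rel_ctx_gen (rel_v M) G.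

Definition eqs_welltyped (M : model) (Sg : signature) (E : list equation) : Prop :=
  forall Gx Z T1 T2, In (Eqn Gx Z T1 T2) E ->
    inhabited (ttyping M Gx Z Sg T1) /\ inhabited (ttyping M Gx Z Sg T2).

Definition reasoning_logic (M : model) : Prop :=
  forall G h E Sg D, M G h E Sg D ->
    (inhabited (htyping M G h D Sg) /\ hnames_ok h Sg) /\ eqs_welltyped M Sg E.

Definition sound (M : model) : Prop :=
  forall G h E Sg D, M G h E Sg D ->
  forall (dh : htyping M G h D Sg), hnames_ok h Sg ->
  forall Gx Z T1 T2, In (Eqn Gx Z T1 T2) E ->
  forall (d1 : ttyping M Gx Z Sg T1) (d2 : ttyping M Gx Z Sg T2)
         (e e' : den_ctx G), rel_ctx M G e e' ->
  forall (a a' : den_ctx Gx), rel_ctx M Gx a a' ->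
  forall (f f' : zden Z (den_c D)), relZ_gen (rel_v M) Z (rel_c M D) f f' ->
    rel_c M D (den_t d1 (den_h dh e) a f) (den_t d2 (den_h dh e') a' f').

(** All relations ~ are partial
    equivalences.  The only interesting cases are handlers and sequencing,
    which both denote a lift f^dagger_H.  Since ~_C is the least symmetric,
    transitive relation closed under its rules, it suffices to check that
    "the lifts are related" is such a relation.  The return and operation
    rules hold because f and H respect ~.  For the equation rules, lifting
    [[T]]_F along f^dagger_H gives [[T]]_H applied to the lifted
    continuations; so for a handler these rules are exactly the soundness
    of the logic, and for [do] they are the equation rules of ~ itself. *)
From Stdlib Require Import List RelationClasses FunctionalExtensionality.
Import ListNotations.

Fixpoint zden_map {Z : list vtype} {Y1 Y2 : Type} (phi : Y1 -> Y2)
  : zden Z Y1 -> zden Z Y2 :=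
  match Z return zden Z Y1 -> zden Z Y2 with
  | [] => fun _ => tt
  | B :: Z' => fun z => (zden_map phi (fst z), fun b => phi (snd z b))
  end.

Lemma proj_z_map Z n B (p : var_in Z n B) Y1 Y2 (phi : Y1 -> Y2)
  (f : zden Z Y1) b :
  proj_z p (zden_map phi f) b = phi (proj_z p f b).
Proof. induction p; simpl; auto. Qed.

Lemma relZ_gen_map (rv : vrel) Z Y1 Y2 (R1 : Y1 -> Y1 -> Prop)
  (R2 : Y2 -> Y2 -> Prop) (phi phi' : Y1 -> Y2) (f f' : zden Z Y1) :
  (forall y y', R1 y y' -> R2 (phi y) (phi' y')) ->
  relZ_gen rv Z R1 f f' -> relZ_gen rv Z R2 (zden_map phi f) (zden_map phi' f').
Proof. induction Z; simpl; intuition. Qed.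

Lemma relZ_gen_mono (rv : vrel) Z Y (R1 R2 : Y -> Y -> Prop) (f f' : zden Z Y) :
  (forall y y', R1 y y' -> R2 y y') ->
  relZ_gen rv Z R1 f f' -> relZ_gen rv Z R2 f f'.
Proof. induction Z; simpl; intuition. Qed.

(* A lift out of the free model is a homomorphism of interpretations. *)
Lemma lift_den_t_free M G Z Sg T (d : ttyping M G Z Sg T) X Y
  (H : interp Sg Y) (g : X -> Y) e f :
  lift H g (den_t d (free_interp Sg (X := X)) e f)
  = den_t d H e (zden_map (lift H g) f).
Proof.
  revert e f; induction d as [| G Z Sg v T1 T2 dv d1 IH1 d2 IH2 | G Z Sg o v T A B p dv dT IH];
    intros e f; simpl.
  - rewrite proj_z_map. reflexivity.
  - destruct (den_val dv e); auto.
  - f_equal. apply functional_extensionality. auto.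
Qed.

Lemma eqs_rel_gen_In M (rv : vrel) A Sg R E :
  eqs_rel_gen M rv (A := A) (Sg := Sg) R E <->
  forall Gx Z T1 T2, In (Eqn Gx Z T1 T2) E ->
  forall (d1 : ttyping M Gx Z Sg T1) (d2 : ttyping M Gx Z Sg T2) a a' f f',
    rel_ctx_gen rv Gx a a' -> relZ_gen rv Z R f f' ->
    R (den_t d1 (free_interp Sg (X := den_v A)) a f)
      (den_t d2 (free_interp Sg (X := den_v A)) a' f').
Proof.
  induction E as [|[Gx Z T1 T2] E IH]; simpl.
  - tauto.
  - rewrite IH. split.
    + intros [Hhd Htl] Gx' Z' T1' T2' [Heq | Hin]; [|auto].
      injection Heq as -> -> -> ->. exact Hhd.
    + intros Hall. split; [apply Hall|]; auto.
Qed.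

Lemma ar_rel_sig_in M Sg o A B (p : sig_in Sg o A B) a a' :
  rel_v M A a a' ->
  ar_rel_gen (rel_v M) Sg (sig_pos p) (sig_in_ar p a) (sig_in_ar p a').
Proof. induction p; simpl; auto. Qed.

Lemma co_rel_sig_in M Sg o A B (p : sig_in Sg o A B) b b' :
  co_rel_gen (rel_v M) Sg (sig_pos p) b b' ->
  rel_v M B (sig_in_co p b) (sig_in_co p b').
Proof. induction p; simpl; auto. Qed.

Lemma rel_ctx_proj M G n A (p : var_in G n A) e e' :
  rel_ctx M G e e' -> rel_v M A (proj_ctx p e) (proj_ctx p e').
Proof. unfold rel_ctx; induction p; simpl; intros [He Ha]; auto. Qed.

#[export] Instance rel_c_PER M C : PER (rel_c M C).
Proof.
  destruct C as [A Sg E]; split.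
  - intros t t' Ht R HR. apply (proj1 HR). exact (Ht R HR).
  - intros t1 t2 t3 H12 H23 R HR.
    apply (proj1 (proj2 HR)) with t2; [exact (H12 R HR) | exact (H23 R HR)].
Qed.

#[export] Instance rel_v_PER M A : PER (rel_v M A).
Proof.
  induction A as [| | A IHA C | C D]; simpl; split.
  1-4: congruence.
  - intros f f' Hf a a' Ha. symmetry. apply Hf. symmetry. exact Ha.
  - intros f g h Hfg Hgh a a' Ha. transitivity (g a'); [auto|].
    apply Hgh. etransitivity; [symmetry|]; exact Ha.
  - intros f f' Hf t t' Ht. symmetry. apply Hf. symmetry. exact Ht.
  - intros f g h Hfg Hgh t t' Ht. transitivity (g t'); [auto|].
    apply Hgh. etransitivity; [symmetry|]; exact Ht.
Qed.

#[export] Instance rel_ctx_PER M G : PER (rel_ctx M G).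
Proof.
  unfold rel_ctx; induction G as [|A G IH]; simpl; split.
  1-2: auto.
  - intros e e' [He Ha]. split; symmetry; assumption.
  - intros e1 e2 e3 [H12 Ha12] [H23 Ha23]. split; etransitivity; eassumption.
Qed.

Definition interp_ops_rel (M : model) {Sg : signature} {Y : Type}
  (R : Y -> Y -> Prop) (H H' : interp Sg Y) : Prop :=
  forall i a a' k k', ar_rel_gen (rel_v M) Sg i a a' ->
    (forall b b', co_rel_gen (rel_v M) Sg i b b' -> R (k b) (k' b')) ->
    R (H i a k) (H' i a' k').

Definition interp_eqs_rel (M : model) (E : list equation) {Sg : signature}
  {Y : Type} (R : Y -> Y -> Prop) (H H' : interp Sg Y) : Prop :=
  forall Gx Z T1 T2, In (Eqn Gx Z T1 T2) E ->
  forall (d1 : ttyping M Gx Z Sg T1) (d2 : ttyping M Gx Z Sg T2) a a' f f',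
    rel_ctx M Gx a a' -> relZ_gen (rel_v M) Z R f f' ->
    R (den_t d1 H a f) (den_t d2 H' a' f').

Lemma sound_interp_eqs_rel M G h E Sg D (dh : htyping M G h D Sg) e e' :
  sound M -> M G h E Sg D -> hnames_ok h Sg -> rel_ctx M G e e' ->
  interp_eqs_rel M E (rel_c M D) (den_h dh e) (den_h dh e').
Proof.
  intros HS Hh Hnames He Gx Z T1 T2 Hin d1 d2 a a' f f' Ha Hf. eapply HS; eauto.
Qed.

Section RelC.
Variables (M : model) (A : vtype) (Sg : signature) (E : list equation).

Lemma rel_c_ret a a' : rel_v M A a a' -> rel_c M (CTy A Sg E) (Ret a) (Ret a').
Proof. intros Ha R (_ & _ & Hret & _). auto. Qed.

Lemma rel_c_op :
  interp_ops_rel M (rel_c M (CTy A Sg E))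
    (free_interp Sg (X := den_v A)) (free_interp Sg (X := den_v A)).
Proof.
  intros i a a' k k' Ha Hk R HR.
  pose proof HR as (_ & _ & _ & Hop & _). apply Hop; [exact Ha|].
  intros b b' Hb. exact (Hk b b' Hb R HR).
Qed.

Lemma rel_c_eqs :
  interp_eqs_rel M E (rel_c M (CTy A Sg E))
    (free_interp Sg (X := den_v A)) (free_interp Sg (X := den_v A)).
Proof.
  intros Gx Z T1 T2 Hin d1 d2 a a' f f' Ha Hf R HR.
  pose proof HR as (_ & _ & _ & _ & Heqs).
  apply (proj1 (eqs_rel_gen_In _ _ _ _ _ _) Heqs _ _ _ _ Hin); [exact Ha|].
  eapply relZ_gen_mono; [|exact Hf].
  intros y y' Hy. exact (Hy R HR).
Qed.

End RelC.

Section Lift.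
Variables (M : model) (A : vtype) (Sg : signature) (E : list equation) (D : ctype).
Variables (J : Type) (Q : J -> J -> Prop).
Context {Q_PER : PER Q}.
Variables (H : J -> interp Sg (den_c D)) (g : J -> den_v A -> den_c D).
Hypothesis g_rel :
  forall j j' a a', Q j j' -> rel_v M A a a' -> rel_c M D (g j a) (g j' a').
Hypothesis H_ops_rel :
  forall j j', Q j j' -> interp_ops_rel M (rel_c M D) (H j) (H j').
Hypothesis H_eqs_rel :
  forall j j', Q j j' -> interp_eqs_rel M E (rel_c M D) (H j) (H j').

Definition lifts_rel (t t' : den_c (CTy A Sg E)) : Prop :=
  forall j j', Q j j' -> rel_c M D (lift (H j) (g j) t) (lift (H j') (g j') t').

Lemma lifts_rel_closed : closed_rel M (rel_v M) E lifts_rel.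
Proof.
  unfold lifts_rel; repeat split.
  - intros t t' Ht j j' Hj. symmetry. apply Ht. symmetry. exact Hj.
  - intros t1 t2 t3 H12 H23 j j' Hj. transitivity (lift (H j') (g j') t2).
    + auto.
    + apply H23. etransitivity; [symmetry|]; exact Hj.
  - intros a a' Ha j j' Hj. simpl. auto.
  - intros i a a' k k' Ha Hk j j' Hj. simpl. apply H_ops_rel; auto.
  - apply eqs_rel_gen_In.
    intros Gx Z T1 T2 Hin d1 d2 a a' f f' Ha Hf j j' Hj.
    rewrite !lift_den_t_free. apply H_eqs_rel; auto.
    eapply relZ_gen_map; [|exact Hf]. auto.
Qed.

Lemma lift_rel t t' j j' :
  rel_c M (CTy A Sg E) t t' -> Q j j' ->
  rel_c M D (lift (H j) (g j) t) (lift (H j') (g j') t').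
Proof. intros Ht. exact (Ht _ lifts_rel_closed j j'). Qed.

End Lift.

Scheme vtyping_ind_mut := Induction for vtyping Sort Prop
with ctyping_ind_mut := Induction for ctyping Sort Prop
with htyping_ind_mut := Induction for htyping Sort Prop.
Combined Scheme typing_ind_mut from vtyping_ind_mut, ctyping_ind_mut, htyping_ind_mut.

Section Fundamental.
Variable M : model.
Hypothesis M_sound : sound M.

Lemma fundamental_lemma :
  (forall G v A (d : vtyping M G v A) e e',
      rel_ctx M G e e' -> rel_v M A (den_val d e) (den_val d e')) /\
  (forall G c C (d : ctyping M G c C) e e',
      rel_ctx M G e e' -> rel_c M C (den_comp d e) (den_comp d e')) /\
  (forall G h D Sg (d : htyping M G h D Sg) e e',
      rel_ctx M G e e' -> interp_ops_rel M (rel_c M D) (den_h d e) (den_h d e')).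
Proof.
  apply typing_ind_mut.
  - intros G n A p e e' He. apply rel_ctx_proj. exact He.
  - reflexivity.
  - reflexivity.
  - reflexivity.
  - intros G A C c dc IHc e e' He a a' Ha. apply IHc. split; auto.
  - intros G A Sg E D cr h dr IHr dh IHh Hnames Hh e e' He t t' Ht.
    apply (lift_rel M A Sg E D (den_ctx G) (rel_ctx M G) (den_h dh)
             (fun j a => den_comp dr (j, a))); auto.
    + intros j j' a a' Hj Ha. apply IHr. split; auto.
    + intros j j' Hj. apply sound_interp_eqs_rel; auto.
  - intros G v c1 c2 C dv IHv d1 IH1 d2 IH2 e e' He.
    simpl. rewrite (IHv e e' He). destruct (den_val dv e'); auto.
  - intros G v1 v2 A C d1 IH1 d2 IH2 e e' He. exact (IH1 e e' He _ _ (IH2 e e' He)).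
  - intros G v A Sg E dv IHv e e' He. apply rel_c_ret; auto.
  - intros G o v c A Sg E Aop Bop p dv IHv dc IHc e e' He.
    apply rel_c_op.
    + apply ar_rel_sig_in; auto.
    + intros b b' Hb. apply IHc. split; [exact He | apply co_rel_sig_in; exact Hb].
  - intros G c1 c2 A B Sg E d1 IH1 d2 IH2 e e' He.
    apply (lift_rel M A Sg E (CTy B Sg E) (den_ctx G) (rel_ctx M G)
             (fun _ => free_interp Sg (X := den_v B)) (fun j a => den_comp d2 (j, a))); auto.
    + intros j j' a a' Hj Ha. apply IH2. split; auto.
    + intros j j' _. apply rel_c_op.
    + intros j j' _. apply rel_c_eqs.
  - intros G v c C D dv IHv dc IHc e e' He. exact (IHv e e' He _ _ (IHc e e' He)).
  - intros G h D e e' He [|i] a; contradiction.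
  - intros G h D Sg o A B c Hc dc IHc dh IHh e e' He [|i] a a' k k' Ha Hk; simpl in *.
    + apply IHc. repeat split; auto.
    + apply IHh; auto.
Qed.

End Fundamental.

Theorem proposition13 (M : model) (HL : reasoning_logic M) (HS : sound M) :
  (forall (G : ctx) (v : value) (A : vtype) (d : vtyping M G v A)
          (e e' : den_ctx G),
      rel_ctx M G e e' -> rel_v M A (den_val d e) (den_val d e')) /\
  (forall (G : ctx) (c : comp) (C : ctype) (d : ctyping M G c C)
          (e e' : den_ctx G),
      rel_ctx M G e e' -> rel_c M C (den_comp d e) (den_comp d e')).
Proof.
  destruct (fundamental_lemma M HS) as (Hv & Hc & _).
  split; [exact Hv | exact Hc].
Qed.
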